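(* Let $G$ be a simple connected graph with at least one edge. Then $H(G)=\bigcap_{\mathcal{F}\in\mathscr{F}}G(A_\mathcal{F})$, where all graphs $G(A_\mathcal{F})$ are regarded as graphs on the common vertex set $E(G)$ (the vertex corresponding to the column of edge $e$ being identified with $e$), and the intersection is taken over all path fixings $\mathcal{F}$ of $G$.
   Context: For distinct $u,v\in V(G)$, $\mathcal{P}_{uv}$ is the set of shortest $(u,v)$-paths in $G$ and $\mathcal{P}$ is the set of all such shortest paths. A path fixing of $G$ is a set $\mathcal{F}\subseteq\mathcal{P}$ with $|\mathcal{F}\cap\mathcal{P}_{uv}|=1$ for all distinct $u,v\in V(G)$; $\mathscr{F}$ is the set of all path fixings. For $\mathcal{F}\in\mathscr{F}$, $A_\mathcal{F}$ is the 0-1 matrix with rows indexed by the paths in $\mathcal{F}$ and columns indexed by $E(G)$, whose $(P,e)$ entry is 1 iff $e\in E(P)$. For a 0-1 matrix $A$ with columns $a_1,\dots,a_n$, $G(A)$ is the graph with one vertex per column, where distinct vertices $i,j$ are adjacent iff $a_i^{T}a_j\geq 1$. An edge $e$ separates distinct $u_1,u_2$ if $e$ lies on every path in $\mathcal{P}_{u_1u_2}$. The auxiliary graph $H(G)$ has vertex set $E(G)$, and distinct $e_1,e_2$ are adjacent in $H(G)$ iff some pair of distinct vertices is separated by both. The intersection of graphs has the intersection of the vertex sets and of the edge sets. *)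

From mathcomp Require Import all_boot all_order all_algebra.
Set Implicit Arguments. Unset Strict Implicit. Unset Printing Implicit Defensive.
Import GRing.Theory Num.Theory.

Section Defs.
Variables (T : finType) (g : rel T).

Definition is_edge (S : {set T}) : bool :=
  [exists u, exists v, g u v && (S == [set u; v])].

Definition edge := {S : {set T} | is_edge S}.

Definition walk_edges (u : T) (s : seq T) : {set edge} :=
  [set S : edge | has (fun p => val S == [set p.1; p.2]) (zip (u :: s) s)].

(* s is the tail of a shortest (u,v)-walk u :: s (hence a shortest path). *)
Definition shortest_walk (u v : T) (s : seq T) : Prop :=
  [/\ path g u s, last u s = v &
      forall s', path g u s' -> last u s' = v -> size s <= size s'].

(* A path with at least one edge is identified with its edge set E(P);
   membership of a path in P_uv. Note P_uv = P_vu. *)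
Definition in_Puv (u v : T) (P : {set edge}) : Prop :=
  exists s, shortest_walk u v s /\ P = walk_edges u s.

Definition in_P (P : {set edge}) : Prop :=
  exists u v, u <> v /\ in_Puv u v P.

Definition path_fixing (F : {set {set edge}}) : Prop :=
  (forall P, P \in F -> in_P P) /\
  (forall u v, u <> v -> exists! P, P \in F /\ in_Puv u v P).

Definition AF (F : {set {set edge}}) : 'M[int]_(#|F|, #|{: edge}|) :=
  \matrix_(i < #|F|, j < #|{: edge}|)
     (((enum_val j \in (enum_val i : {set edge})) : nat)%:R)%R.

Definition separates (e : edge) (u1 u2 : T) : Prop :=
  forall P, in_Puv u1 u2 P -> e \in P.

Definition H_adj (e1 e2 : edge) : Prop :=
  e1 <> e2 /\ exists u1 u2, u1 <> u2 /\ separates e1 u1 u2 /\ separates e2 u1 u2.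

End Defs.

Definition colgraph_adj (m n : nat) (A : 'M[int]_(m, n)) (i j : 'I_n) : bool :=
  (i != j) && (1 <= ((col i A)^T *m col j A) 0 0)%R.

(* If some pair u <> v is separated by both e1 and e2, every path fixing F
   contains a shortest (u,v)-path, which is a common 1 of the columns e1 and e2
   of A_F.  Conversely, if no pair is separated by both edges, choose for each
   unordered pair {u, v} a shortest (u,v)-path missing e1 or e2.  This is a
   path fixing, because the edge set of a shortest path determines its ends
   (its vertices of degree one), so distinct pairs never share a chosen path;
   and for it the columns e1 and e2 of A_F are orthogonal. *)

From mathcomp Require Import all_boot all_order all_algebra.
From mathcomp Require Import zify.
From Stdlib Require Import Classical ClassicalEpsilon.
Set Implicit Arguments. Unset Strict Implicit. Unset Printing Implicit Defensive.
Import GRing.Theory Num.Theory.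

Lemma zip_rcons_l (A B : Type) (s : seq A) (t : seq B) x :
  size s = size t -> zip (rcons s x) t = zip s t.
Proof. by move=> st; rewrite -cats1 -[t in LHS]cats0 zip_cat // cats0. Qed.

Lemma has_zip_swap (A B : Type) (p : A -> B -> bool) (s : seq A) (t : seq B) :
  has (fun ab => p ab.1 ab.2) (zip s t) = has (fun ba => p ba.2 ba.1) (zip t s).
Proof. by elim: s t => [|x s IHs] [|y t] //=; rewrite IHs. Qed.

Lemma set2_eq_set2 (T : finType) (x y u v : T) :
  [set x; y] = [set u; v] -> u != v -> (x = u /\ y = v) \/ (x = v /\ y = u).
Proof.
move=> E; have := set21 u v; have := set22 u v; rewrite -E !in_set2.
by case/orP=> /eqP-> /orP[]/eqP->; rewrite ?eqxx //; [right | left].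
Qed.

Section Walks.
Variables (T : finType) (g : rel T).

Lemma exists_shortest_walk u v : connect g u v -> exists s, shortest_walk g u v s.
Proof.
case/connectP=> p gp pv.
pose has_walk n := [exists t : n.-tuple T, path g u t && (last u t == v)].
have [|n] := @ex_minnP has_walk.
  by exists (size p); apply/existsP; exists (in_tuple p); rewrite gp pv eqxx.
case/existsP=> t /andP [gt /eqP tv] n_min.
exists t; split=> // s gs sv; rewrite size_tuple; apply: n_min.
by apply/existsP; exists (in_tuple s); rewrite gs sv eqxx.
Qed.

Lemma shortest_walk_uniq u v s : shortest_walk g u v s -> uniq (u :: s).
Proof.
case=> gs sv s_min; rewrite -[uniq _]negbK -ltn_size_undup -leqNgt.
case: (shortenP gs) sv => s' gs' uniq_s' sub_s' /(s_min _ gs') s_s'.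
apply: leq_trans (uniq_leq_size uniq_s' _); first by rewrite ltnS.
by move=> x; rewrite mem_undup !inE => /orP [->|/sub_s' ->]; rewrite ?orbT.
Qed.

Lemma walk_edges_rev u s :
  walk_edges g (last u s) (rev (belast u s)) = walk_edges g u s.
Proof.
apply/setP=> S; rewrite !inE.
have -> : last u s :: rev (belast u s) = rcons (rev s) u.
  by rewrite -rev_rcons -lastI rev_cons.
rewrite [u :: s]lastI !zip_rcons_l ?size_rev ?size_belast //.
rewrite -rev_zip ?size_belast // has_rev (has_zip_swap (fun x y => val S == [set x; y])).
by apply: eq_has => -[x y] /=; rewrite setUC.
Qed.

Lemma mem_walk_edges u s S :
  reflect (exists2 i, i < size s &
             val S = [set nth u (u :: s) i; nth u (u :: s) i.+1])
          (S \in walk_edges g u s).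
Proof.
have sz : size (zip (u :: s) s) = size s by rewrite size_zip /= (minn_idPr (leqnSn _)).
rewrite inE; apply: (iffP hasP) => [[[x y]]|[i lt_i ->]].
  case/(nthP (u, u))=> i lt_i xy /eqP ->; rewrite sz in lt_i; exists i => //.
  by move: xy; rewrite nth_zip_cond sz lt_i => -[<- <-].
exists (nth u (u :: s) i, nth u s i) => //.
apply/(nthP (u, u)); exists i; first by rewrite sz.
by rewrite nth_zip_cond sz lt_i.
Qed.

Definition path_ends (P : {set edge g}) : {set T} :=
  [set x | #|[set S in P | x \in val S]| == 1].

Section SimpleWalk.
Variables (u : T) (s : seq T).
Hypotheses (gs : path g u s) (us : uniq (u :: s)) (s_gt0 : 0 < size s).
Local Notation q := (nth u (u :: s)).
Local Notation P := (walk_edges g u s).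

Lemma walk_edge_at i : i < size s -> exists2 S, S \in P & val S = [set q i; q i.+1].
Proof.
move=> lt_i.
have eS : is_edge g [set q i; q i.+1].
  apply/existsP; exists (q i); apply/existsP; exists (q i.+1).
  by rewrite (pathP u gs) ?eqxx.
exists (exist (is_edge g) _ eS); last by [].
by apply/mem_walk_edges; exists i.
Qed.

Lemma walk_vertex_inj i j : i <= size s -> j <= size s -> (q i == q j) = (i == j).
Proof. by move=> le_i le_j; rewrite nth_uniq ?ltnS. Qed.

Lemma walk_edge_index S j : S \in P -> j <= size s -> q j \in val S ->
  exists2 i, i < size s & val S = [set q i; q i.+1] /\ (j = i \/ j = i.+1).
Proof.
case/mem_walk_edges=> i lt_i SE le_j qjS; exists i; first exact: lt_i.
split; first exact: SE.
have le_i := ltnW lt_i.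
move: qjS; rewrite SE in_set2 !walk_vertex_inj //.
by case/orP=> /eqP; [left | right].
Qed.

Lemma walk_degree_one j i : i < size s -> (j = i \/ j = i.+1) ->
  (forall i', i' < size s -> j = i' \/ j = i'.+1 -> i' = i) ->
  #|[set S in P | q j \in val S]| == 1.
Proof.
move=> lt_i ji i_uniq; have [S0 PS0 S0E] := walk_edge_at lt_i.
have le_j : j <= size s by lia.
apply/cards1P; exists S0; apply/setP=> S.
apply/setIdP/set1P=> [[PS qjS]|->]; last first.
  by rewrite PS0 S0E in_set2; case: ji => ->; rewrite eqxx ?orbT.
have [i' lt_i' [SE /(i_uniq _ lt_i') eq_i]] := walk_edge_index PS le_j qjS.
by apply: val_inj; rewrite SE S0E eq_i.
Qed.

Lemma walk_degree j : j <= size s ->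
  (#|[set S in P | q j \in val S]| == 1) = (j == 0) || (j == size s).
Proof.
move=> le_j; case: (posnP j) => [->|j_gt0].
  by rewrite (@walk_degree_one 0 0) //; lia.
case: (ltngtP j (size s)) => [lt_j|gt_j|->]; last 2 first.
- by move: le_j; rewrite leqNgt gt_j.
- by rewrite orbT (@walk_degree_one _ (size s).-1); lia.
apply/negbTE; rewrite neq_ltn; apply/orP; right.
have [S1 PS1 S1E] := walk_edge_at (i := j.-1) (leq_ltn_trans (leq_pred j) lt_j).
have [S2 PS2 S2E] := walk_edge_at lt_j.
apply/card_gt1P; exists S1, S2; split.
- by apply/setIdP; rewrite S1E (prednK j_gt0) set22.
- by apply/setIdP; rewrite S2E set21.
apply/eqP=> /(congr1 val); rewrite S1E S2E => /setP/(_ (q j.-1)).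
by rewrite !in_set2 eqxx !walk_vertex_inj; lia.
Qed.

Lemma walk_ends : path_ends P = [set u; last u s].
Proof.
apply/setP=> x; rewrite in_set in_set2.
have [/(nthP u) [j lt_j <-]|x_notin] := boolP (x \in u :: s).
  have q_first : (q j == u) = (j == 0) := walk_vertex_inj lt_j (leq0n _).
  have q_last : (q j == last u s) = (j == size s).
    by rewrite -[last u s]/(last u (u :: s)) -nth_last walk_vertex_inj.
  by rewrite walk_degree // q_first q_last.
have -> : [set S in P | x \in val S] = set0.
  apply/setP=> S; rewrite in_set0; apply/setIdP=> -[/mem_walk_edges [i lt_i ->]].
  rewrite in_set2 => /orP [] /eqP x_q; case/negP: x_notin; rewrite x_q; apply: mem_nth.
  - by rewrite ltnS ltnW.
  - exact: lt_i.
have x_u : x != u by apply: contraNneq x_notin => ->; exact: mem_head.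
have x_last : x != last u s by apply: contraNneq x_notin => ->; exact: mem_last.
by rewrite cards0 (negbTE x_u) (negbTE x_last).
Qed.
End SimpleWalk.

Lemma in_Puv_ends u v (P : {set edge g}) :
  u <> v -> in_Puv u v P -> path_ends P = [set u; v].
Proof.
move=> uv [s [sw ->]]; have [gs sv _] := sw.
have s_gt0 : 0 < size s by case: s sv {gs sw} => // vu; case: uv.
by rewrite (walk_ends gs (shortest_walk_uniq sw) s_gt0) sv.
Qed.

Hypothesis gsym : symmetric g.

Lemma path_rev_walk u s : path g u s -> path g (last u s) (rev (belast u s)).
Proof. by rewrite rev_path; apply: sub_path => x y; rewrite /= gsym. Qed.

Lemma last_rev_walk (u : T) s : last (last u s) (rev (belast u s)) = u.
Proof. by case: s => //= x s; rewrite rev_cons last_rcons. Qed.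

Lemma shortest_walk_rev u v s :
  shortest_walk g u v s -> shortest_walk g v u (rev (belast u s)).
Proof.
case=> gs <- s_min; split; [exact: path_rev_walk | exact: last_rev_walk |].
move=> t gt tu; rewrite size_rev size_belast.
apply: leq_trans (s_min (rev (belast (last u s) t)) _ _) _.
- by rewrite -[X in path g X _]tu path_rev_walk.
- by rewrite -[X in last X _]tu last_rev_walk.
- by rewrite size_rev size_belast.
Qed.

Lemma in_Puv_sym u v (P : {set edge g}) : in_Puv u v P -> in_Puv v u P.
Proof.
case=> s [sw ->]; exists (rev (belast u s)); split; first exact: shortest_walk_rev.
by case: sw => _ <- _; rewrite walk_edges_rev.
Qed.

Lemma exists_good_path_fixing (good : {set edge g} -> Prop) :
  (forall u v, u <> v -> exists2 P, in_Puv u v P & good P) ->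
  exists2 F, path_fixing F & {in F, forall P, good P}.
Proof.
move=> good_path.
(* Choosing per unordered pair serves P_uv and P_vu with the same path. *)
pose fit A P := forall u v, u <> v -> A = [set u; v] -> in_Puv u v P /\ good P.
have [c c_fit] : exists c : {set T} -> {set edge g}, forall A, fit A (c A).
  apply: choice => A.
  have [[x [y [xy ->]]]|not_pair] := classic (exists x y, x <> y /\ A = [set x; y]).
    have [P Pxy good_P] := good_path x y xy.
    exists P => u v /eqP uv /set2_eq_set2 /(_ uv) [[<- <-]|[<- <-]] //.
    by split=> //; apply: in_Puv_sym.
  by exists set0 => u v uv A_uv; case: not_pair; exists u, v.
have c_spec u v : u <> v -> in_Puv u v (c [set u; v]) /\ good (c [set u; v]).
  by move=> uv; apply: c_fit.
exists [set c [set u; v] | u : T, v : T in [set~ u]]; last first.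
  by move=> _ /imset2P [u v _ /[!in_setC1] /eqP /nesym uv ->]; case: (c_spec u v uv).
split.
  move=> _ /imset2P [u v _ /[!in_setC1] /eqP /nesym uv ->]; exists u, v.
  by split=> //; case: (c_spec u v uv).
move=> u v uv; exists (c [set u; v]); split.
  split; last by case: (c_spec u v uv).
  by apply/imset2P; exists u v; rewrite // in_setC1 eq_sym; apply/eqP.
move=> _ [/imset2P [a b _ /[!in_setC1] /eqP /nesym ab ->] Puv].
(* Both {a, b} and {u, v} are the ends of the chosen path. *)
by rewrite -(in_Puv_ends ab (c_spec a b ab).1) (in_Puv_ends uv Puv).
Qed.

End Walks.

Lemma exists_path_avoiding (T : finType) (g : rel T) (e : edge g) u v :
  ~ separates e u v -> exists2 P, in_Puv u v P & e \notin P.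
Proof.
move=> not_sep; apply: NNPP => no_P; apply: not_sep => P Puv.
by apply/negPn/negP => eNP; apply: no_P; exists P.
Qed.

Local Open Scope ring_scope.

Lemma colgraph_adj_AF (T : finType) (g : rel T) (F : {set {set edge g}})
    (e1 e2 : edge g) :
  colgraph_adj (AF F) (enum_rank e1) (enum_rank e2) =
  (e1 != e2) && [exists P in F, (e1 \in P) && (e2 \in P)].
Proof.
rewrite /colgraph_adj (inj_eq enum_rank_inj); congr (_ && _).
have -> : ((col (enum_rank e1) (AF F))^T *m col (enum_rank e2) (AF F)) 0 0 =
          (\sum_(P in F) ((e1 \in P) && (e2 \in P)) : nat)%:R.
  rewrite !mxE natr_sum [RHS]big_enum_val; apply: eq_bigr => i _.
  by rewrite !mxE !enum_rankK; case: (e1 \in _); case: (e2 \in _).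
rewrite ler1n lt0n sum_nat_eq0 negb_forall_in.
by apply: eq_existsb => P; rewrite eqb0 negbK.
Qed.

Theorem proposition5 (T : finType) (g : rel T)
  (gsym : symmetric g) (girr : irreflexive g)
  (gconn : forall u v : T, connect g u v)
  (gedge : exists u v : T, g u v) :
  forall e1 e2 : edge g,
    H_adj e1 e2 <->
    (forall F : {set {set edge g}}, path_fixing F ->
       colgraph_adj (AF F) (enum_rank e1) (enum_rank e2)).
Proof.
move=> e1 e2; split.
  case=> e12 [u [v [uv [sep1 sep2]]]] F [_ fixF].
  have [P [[PF Puv] _]] := fixF u v uv.
  rewrite colgraph_adj_AF; apply/andP; split; first exact/eqP.
  by apply/existsP; exists P; rewrite PF (sep1 P Puv) (sep2 P Puv).
move=> adj.
have any_path (u v : T) : u <> v -> exists2 P : {set edge g}, in_Puv u v P & True.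
  have [s sw] := exists_shortest_walk (gconn u v).
  by exists (walk_edges g u s) => //; exists s.
have [F0 fixF0 _] := exists_good_path_fixing gsym any_path.
have := adj F0 fixF0; rewrite colgraph_adj_AF => /andP [e12 _].
apply: NNPP => notH.
have avoid (u v : T) :
    u <> v -> exists2 P : {set edge g}, in_Puv u v P & ~~ ((e1 \in P) && (e2 \in P)).
  move=> uv; have [sep1|] := classic (separates e1 u v); last first.
    by case/exists_path_avoiding=> P Puv e1P; exists P; rewrite // (negbTE e1P).
  have [sep2|P Puv e2P] := @exists_path_avoiding _ _ e2 u v.
    by apply: notH; split; [exact/eqP | exists u, v].
  by exists P; rewrite // (negbTE e2P) andbF.
have [F fixF avoidF] := exists_good_path_fixing gsym avoid.
have := adj F fixF; rewrite colgraph_adj_AF => /andP [_ /existsP [P /andP [PF]]].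
by rewrite (negbTE (avoidF P PF)).
Qed.
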